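(* Let $\sigma(x,y)=(x\rightharpoonup y,x\leftharpoonup y)$ be a right-non-degenerate involutive quiver-theoretic Yang--Baxter map on a quiver $\mathscr{A}$ over $\Lambda$. For $x,y\in\mathscr{A}$ with $\mathfrak{t}(x)=\mathfrak{t}(y)$ set $x\bullet y:=(\cdot\leftharpoonup x)^{-1}(y)$. Then $(\mathscr{A},\bullet)$ is a left-non-degenerate weak co-RC-system, and $x\bullet y$ is defined whenever $\mathfrak{t}(x)=\mathfrak{t}(y)$.
   Context: A quiver over $\Lambda$ has source/target maps $\mathfrak{s},\mathfrak{t}$; $Q(\lambda,\Lambda)$ (resp. $Q(\Lambda,\mu)$) denotes arrows with source $\lambda$ (resp. target $\mu$). A quiver-theoretic Yang--Baxter map is a source/target-preserving map $\sigma$ on composable pairs $\mathscr{A}\otimes\mathscr{A}$ satisfying the braid relation $(\sigma\otimes\mathrm{id})(\mathrm{id}\otimes\sigma)(\sigma\otimes\mathrm{id})=(\mathrm{id}\otimes\sigma)(\sigma\otimes\mathrm{id})(\mathrm{id}\otimes\sigma)$; involutive: $\sigma^2=\mathrm{id}$; right-non-degenerate: each $\cdot\leftharpoonup y\colon\mathscr{A}(\Lambda,\mathfrak{s}(y))\to\mathscr{A}(\Lambda,\mathfrak{t}(y))$ is bijective. A weak co-RC-system $(Q,\bullet)$ is a quiver $Q$ with a partially defined binary operation $\bullet$ such that: $x\bullet y$ is defined only if $\mathfrak{t}(x)=\mathfrak{t}(y)$; whenever $x\bullet y$ is defined, $y\bullet x$ is defined, $\mathfrak{t}(x\bullet y)=\mathfrak{s}(x)$,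 $\mathfrak{t}(y\bullet x)=\mathfrak{s}(y)$, $\mathfrak{s}(x\bullet y)=\mathfrak{s}(y\bullet x)$; and whenever $x\bullet y$, $x\bullet z$, $(x\bullet y)\bullet(x\bullet z)$ are defined, then $y\bullet z$ and $(y\bullet x)\bullet(y\bullet z)$ are defined and $(x\bullet y)\bullet(x\bullet z)=(y\bullet x)\bullet(y\bullet z)$. It is left-non-degenerate if every map $x\bullet\cdot\colon Q(\Lambda,\mathfrak{t}(x))\to Q(\Lambda,\mathfrak{s}(x))$ is a bijection. *)

From Stdlib Require Import Classical ClassicalEpsilon.

Set Implicit Arguments.

Section Quiver.
Variables (L A : Type) (s t : A -> L).

(* A pair (x,y) is composable (lies in A ⊗ A) when t x = s y. *)
Definition composable (x y : A) : Prop := t x = s y.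

(* A map sigma on composable pairs, written sigma(x,y) = (rh x y, lh x y)
   with rh = "⇀" and lh = "↼". The functions rh, lh are total but only
   their values on composable pairs matter. *)

Definition st_preserving (rh lh : A -> A -> A) : Prop :=
  forall x y, composable x y ->
    s (rh x y) = s x /\ t (rh x y) = s (lh x y) /\ t (lh x y) = t y.

Definition sig12 (rh lh : A -> A -> A) (w : A * A * A) : A * A * A :=
  let '(a, b, c) := w in (rh a b, lh a b, c).
Definition sig23 (rh lh : A -> A -> A) (w : A * A * A) : A * A * A :=
  let '(a, b, c) := w in (a, rh b c, lh b c).

Definition braid (rh lh : A -> A -> A) : Prop :=
  forall x y z, composable x y -> composable y z ->
    sig12 rh lh (sig23 rh lh (sig12 rh lh (x, y, z)))
    = sig23 rh lh (sig12 rh lh (sig23 rh lh (x, y, z))).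

Definition qYB_map (rh lh : A -> A -> A) : Prop :=
  st_preserving rh lh /\ braid rh lh.

Definition involutive_map (rh lh : A -> A -> A) : Prop :=
  forall x y, composable x y ->
    rh (rh x y) (lh x y) = x /\ lh (rh x y) (lh x y) = y.

Definition right_nondeg (lh : A -> A -> A) : Prop :=
  forall y,
    (forall x1 x2, t x1 = s y -> t x2 = s y -> lh x1 y = lh x2 y -> x1 = x2)
    /\ (forall z, t z = t y -> exists x, t x = s y /\ lh x y = z).

(* Partial binary operation: op x y = Some z means x • y is defined and equals z. *)
Definition weak_coRC (op : A -> A -> option A) : Prop :=
  (forall x y z, op x y = Some z -> t x = t y)
  /\ (forall x y u, op x y = Some u ->
        exists v, op y x = Some v /\
          t u = s x /\ t v = s y /\ s u = s v)
  /\ (forall x y z u v w,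
        op x y = Some u -> op x z = Some v -> op u v = Some w ->
        exists p q, op y z = Some p /\ op y x = Some q /\ op q p = Some w).

Definition left_nondeg (op : A -> A -> option A) : Prop :=
  forall x,
    (forall y, t y = t x -> exists z, op x y = Some z /\ t z = s x)
    /\ (forall y1 y2 z, t y1 = t x -> t y2 = t x ->
          op x y1 = Some z -> op x y2 = Some z -> y1 = y2)
    /\ (forall w, t w = s x -> exists y, t y = t x /\ op x y = Some w).

(* x • y := (· ↼ x)^{-1}(y), for t x = t y: the (chosen) arrow z with
   t z = s x and z ↼ x = y, if any; undefined otherwise. *)
Definition bullet (lh : A -> A -> A) (x y : A) : option A :=
  match excluded_middle_informative
          (exists z, t x = t y /\ t z = s x /\ lh z x = y) with
  | left H => Some (proj1_sig (constructive_indefinite_description _ H))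
  | right _ => None
  end.

End Quiver.

From Stdlib Require Import Classical ClassicalEpsilon.

(* By right non-degeneracy, x • y = z exactly when t z = s x and z ↼ x = y,
   i.e. when σ(z, x) = (z ⇀ x, y).  Involutivity turns this around:
   σ(z ⇀ x, y) = (z, x), so y • x = z ⇀ x.  For the cyclic law put u = x • y,
   v = x • z, w = u • v and apply the braid relation to (w, u, x): its two
   sides end in z and in (w ↼ (u ⇀ x)) ↼ y, so y • z = w ↼ (y • x), which says
   (y • x) • (y • z) = w. *)

Section Bullet.
Variables (L A : Type) (s t : A -> L) (rh lh : A -> A -> A).
Hypotheses (ST : st_preserving s t rh lh) (INV : involutive_map s t rh lh)
  (BR : braid s t rh lh) (RN : right_nondeg s t lh).

Lemma bullet_Some x y z :
  bullet s t lh x y = Some z -> t x = t y /\ t z = s x /\ lh z x = y.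
Proof.
  unfold bullet. destruct excluded_middle_informative as [H|H]; [|discriminate].
  intro E. injection E as <-.
  exact (proj2_sig (constructive_indefinite_description _ H)).
Qed.

Lemma bullet_SomeE x y z :
  bullet s t lh x y = Some z <-> t x = t y /\ t z = s x /\ lh z x = y.
Proof.
  split; [apply bullet_Some|].
  intros (Hxy & Hz & Hzx). unfold bullet.
  destruct excluded_middle_informative as [H|H].
  - f_equal.
    destruct (proj2_sig (constructive_indefinite_description _ H)) as (_ & Hz' & Hz'x).
    apply (proj1 (RN x)); congruence.
  - exfalso. apply H. eauto.
Qed.

Lemma bullet_defined x y : t x = t y -> exists z, bullet s t lh x y = Some z.
Proof.
  intro Hxy. destruct (proj2 (RN x) y (eq_sym Hxy)) as (z & Hz & Hzx).
  exists z. apply bullet_SomeE. auto.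
Qed.

Lemma bullet_lh x w : t w = s x -> bullet s t lh x (lh w x) = Some w.
Proof.
  intro Hw. destruct (ST w x Hw) as (_ & _ & Ht).
  apply bullet_SomeE. auto.
Qed.

Lemma bullet_swap x y u :
  bullet s t lh x y = Some u -> bullet s t lh y x = Some (rh u x).
Proof.
  rewrite bullet_SomeE. intros (Hxy & Hu & <-).
  destruct (ST u x Hu) as (_ & Hrh & _).
  destruct (INV u x Hu) as (_ & Hinv).
  apply bullet_SomeE. auto.
Qed.

Lemma bullet_cyclic x y z u v w :
  bullet s t lh x y = Some u -> bullet s t lh x z = Some v ->
  bullet s t lh u v = Some w ->
  bullet s t lh y z = Some (lh w (rh u x)) /\
  bullet s t lh (rh u x) (lh w (rh u x)) = Some w.
Proof.
  intros Hxy_u Hxz_v Huv_w.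
  apply bullet_Some in Hxy_u as (Hxy & Hu & Hy).
  apply bullet_Some in Hxz_v as (Hxz & _ & Hz).
  apply bullet_Some in Huv_w as (_ & Hw & Hwu).
  pose proof (BR w u x Hw Hu) as Hbraid. simpl in Hbraid.
  rewrite Hwu, Hz, Hy in Hbraid. injection Hbraid as _ _ Hyz.
  destruct (ST u x Hu) as (Hsrh & Htrh & _).
  assert (Hwq : t w = s (rh u x)) by congruence.
  destruct (ST w (rh u x) Hwq) as (_ & _ & Hp).
  split.
  - apply bullet_SomeE. repeat split; congruence.
  - apply bullet_lh, Hwq.
Qed.

Lemma bullet_weak_coRC : weak_coRC s t (bullet s t lh).
Proof.
  split; [|split].
  - intros x y z Hz. apply bullet_Some in Hz. tauto.
  - intros x y u Hu. exists (rh u x).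
    split; [apply bullet_swap, Hu|].
    apply bullet_Some in Hu as (_ & Hu & Hy).
    destruct (ST u x Hu) as (Hsrh & Htrh & _).
    subst y. auto.
  - intros x y z u v w Hu Hv Hw.
    destruct (bullet_cyclic x y z u v w Hu Hv Hw) as (Hyz & Hqp).
    exists (lh w (rh u x)), (rh u x).
    split; [exact Hyz | split; [apply bullet_swap, Hu | exact Hqp]].
Qed.

Lemma bullet_left_nondeg : left_nondeg s t (bullet s t lh).
Proof.
  intro x. split; [|split].
  - intros y Hy. destruct (bullet_defined x y (eq_sym Hy)) as (z & Hz).
    exists z. split; [exact Hz|].
    apply bullet_Some in Hz. tauto.
  - intros y1 y2 z _ _ H1 H2.
    apply bullet_Some in H1 as (_ & _ & <-).
    apply bullet_Some in H2 as (_ & _ & <-).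
    reflexivity.
  - intros w Hw. exists (lh w x).
    destruct (ST w x Hw) as (_ & _ & Ht).
    split; [exact Ht | apply bullet_lh, Hw].
Qed.

End Bullet.

Theorem proposition5p2 (L A : Type) (s t : A -> L) (rh lh : A -> A -> A) :
  qYB_map s t rh lh ->
  involutive_map s t rh lh ->
  right_nondeg s t lh ->
  weak_coRC s t (bullet s t lh) /\ left_nondeg s t (bullet s t lh) /\
  (forall x y, t x = t y -> exists z, bullet s t lh x y = Some z).
Proof.
  intros [ST BR] INV RN.
  split; [|split].
  - eapply bullet_weak_coRC; eassumption.
  - eapply bullet_left_nondeg; eassumption.
  - eapply bullet_defined; eassumption.
Qed.
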